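(* Let $N\ge1$, $f:\mathbb{N}^N\to\mathbb{N}$, $p$ a prime, and $k=\sum_{j=0}^r k_jp^j$ with $0\le k_j<p$. Let $\boldsymbol{\ell}\in\mathbb{N}^N$. Then $$\binom{k}{\boldsymbol{\ell}}_f\equiv\sum_{(\mathbf{m}_0,\dots,\mathbf{m}_r)}\prod_{i=0}^r\binom{k_i}{\mathbf{m}_i}_f\pmod p,$$ where the sum is over all $(\mathbf{m}_0,\dots,\mathbf{m}_r)\in(\mathbb{N}^N)^{r+1}$ with $\mathbf{m}_0+\mathbf{m}_1p+\cdots+\mathbf{m}_rp^r=\boldsymbol{\ell}$.
   Context: $\mathbb{N}=\{0,1,2,\dots\}$. For $k\ge0$ and $\mathbf{x}\in\mathbb{N}^N$, $\binom{k}{\mathbf{x}}_f=\sum_{\mathbf{m}_1+\cdots+\mathbf{m}_k=\mathbf{x}} f(\mathbf{m}_1)\cdots f(\mathbf{m}_k)$ over tuples of vectors in $\mathbb{N}^N$. *)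

From mathcomp Require Import all_boot.
Set Implicit Arguments. Unset Strict Implicit. Unset Printing Implicit Defensive.

Definition vecN (N : nat) := {ffun 'I_N -> nat}.

(* Largest coordinate of x: every summand of a decomposition of x is bounded by it. *)
Definition vbound (N : nat) (x : vecN N) : nat := \max_(j < N) x j.

Definition bvec (N b : nat) := {ffun 'I_N -> 'I_b.+1}.
Definition bvec_val (N b : nat) (m : bvec N b) : vecN N := [ffun j => (m j : nat)].

(* binom_f k x = sum over (m_1,...,m_k) in (N^N)^k with m_1+...+m_k = x of
   f(m_1)...f(m_k).  Summands m_i of such a tuple satisfy m_i <= x
   coordinatewise, so restricting coordinates to [0, vbound x] loses nothing. *)
Definition binomf (N : nat) (f : vecN N -> nat) (k : nat) (x : vecN N) : nat :=
  \sum_(t : {ffun 'I_k -> bvec N (vbound x)}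
          | [forall j : 'I_N, \sum_(i < k) (t i j : nat) == x j])
     \prod_(i < k) f (bvec_val (t i)).

Definition lucas_rhs (N : nat) (f : vecN N -> nat) (p r : nat) (kd : nat -> nat)
  (l : vecN N) : nat :=
  \sum_(t : {ffun 'I_r.+1 -> bvec N (vbound l)}
          | [forall j : 'I_N, \sum_(i < r.+1) (t i j : nat) * p ^ i == l j])
     \prod_(i < r.+1) binomf f (kd i) (bvec_val (t i)).

From mathcomp Require Import all_boot all_algebra.
From mathcomp Require Import finfield mpoly.
Set Implicit Arguments. Unset Strict Implicit. Unset Printing Implicit Defensive.
Import GRing.Theory.
Local Open Scope ring_scope.

(* Let G_f = sum_m f(m) X^m in F_p[X_1, ..., X_N], truncated to a box large
   enough for the coefficient at hand.  Then binom_f(k, x) is the coefficient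
   of X^x in G_f^k, and the truncation of G_f^k is G_(binom_f(k, .)).  Writing
   k = sum_i k_i p^i, G_f^k = prod_i (G_f^(k_i))^(p^i), and in characteristic p
   the Frobenius map sends G_g = sum_m g(m) X^m to sum_m g(m) X^(p m), since
   c^p = c for c in F_p.  Reading off the coefficient of X^l gives the
   right-hand side. *)

Section GeneratingPolynomial.
Variables (R : comNzRingType) (N : nat).
Local Notation poly := {mpoly R[N]}.

Definition mnm_of_vec (x : vecN N) : 'X_{1..N} := [multinom x j | j < N].

Lemma mnm_of_vecK (y : 'X_{1..N}) : mnm_of_vec [ffun j => y j] = y.
Proof. by apply/mnmP => j; rewrite mnmE ffunE. Qed.

Lemma eq_mnm_of_bvec_sum n b (w : 'I_n -> nat) (t : 'I_n -> bvec N b) (x : vecN N) :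
  ((\sum_(i < n) mnm_of_vec (bvec_val (t i)) *+ w i)%MM == mnm_of_vec x)
  = [forall j, \sum_(i < n) t i j * w i == x j]%N.
Proof.
have sumE j : ((\sum_(i < n) mnm_of_vec (bvec_val (t i)) *+ w i)%MM j
               = \sum_(i < n) t i j * w i)%N.
  by rewrite mnm_sumE; apply: eq_bigr => i _; rewrite mulmnE mnmE ffunE.
apply/eqP/forallP => [sum_eq j | H]; first by rewrite -sumE sum_eq mnmE.
by apply/mnmP => j; rewrite sumE mnmE (eqP (H j)).
Qed.

Lemma mcoeff_prod_sum n b (c : 'I_n -> bvec N b -> R)
    (e : 'I_n -> bvec N b -> 'X_{1..N}) y :
  (\prod_(i < n) \sum_(m : bvec N b) c i m *: ('X_[e i m] : poly))@_y =
  \sum_(t : {ffun 'I_n -> bvec N b} | (\sum_(i < n) e i (t i))%MM == y)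
     \prod_(i < n) c i (t i).
Proof.
rewrite bigA_distr_bigA /= raddf_sum [RHS]big_mkcond /=; apply: eq_bigr => t _.
rewrite scaler_prod -(big_morph _ (@mpolyXD _ _) (@mpolyX0 _ _)) mcoeffZ mcoeffX.
by case: eqP; rewrite ?mulr1 ?mulr0.
Qed.

Definition gen_mpoly b (g : vecN N -> nat) : poly :=
  \sum_(m : bvec N b) (g (bvec_val m))%:R *: 'X_[mnm_of_vec (bvec_val m)].

Lemma mcoeff_gen_mpoly b g (x : vecN N) :
  (forall j, x j <= b)%N -> (gen_mpoly b g)@_(mnm_of_vec x) = (g x)%:R.
Proof.
move=> x_le_b; pose mx : bvec N b := [ffun j => inord (x j)].
have mxE : bvec_val mx = x by apply/ffunP => j; rewrite !ffunE inordK ?ltnS.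
rewrite raddf_sum (bigD1 mx) //= big1 => [|m m_neq].
  by rewrite mcoeffZ mcoeffX mxE eqxx mulr1 addr0.
rewrite mcoeffZ mcoeffX; case: eqP => [/mnmP eq_m|]; last by rewrite mulr0.
case/eqP: m_neq; apply/ffunP => j; apply: val_inj.
by have := eq_m j; rewrite /= !mnmE !ffunE inordK ?ltnS.
Qed.

Lemma vbound_ge (x : vecN N) j : (x j <= vbound x)%N.
Proof. exact: (leq_bigmax_cond (F := fun j => x j)). Qed.

Lemma binomf_mcoeff f k (x : vecN N) :
  (binomf f k x)%:R = ((gen_mpoly (vbound x) f) ^+ k)@_(mnm_of_vec x).
Proof.
rewrite -[k in _ ^+ k]card_ord -prodr_const mcoeff_prod_sum /binomf natr_sum.
apply: eq_big => [t|t _]; last by rewrite natr_prod.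
under eq_bigr do rewrite -[mnm_of_vec _]mulm1n.
rewrite eq_mnm_of_bvec_sum; apply: eq_forallb => j.
by congr (_ == _); apply: eq_bigr => i _; rewrite muln1.
Qed.

Definition coef_eq_upto b (P Q : poly) :=
  forall y : 'X_{1..N}, (forall j, y j <= b)%N -> P@_y = Q@_y.

Lemma coef_eq_uptoM b P P' Q Q' :
  coef_eq_upto b P P' -> coef_eq_upto b Q Q' -> coef_eq_upto b (P * Q) (P' * Q').
Proof.
move=> eqPP' eqQQ' y y_le_b; rewrite !mcoeffM; apply: eq_bigr => k /eqP y_eq.
have le_b j : (k.1 j + k.2 j <= b)%N by rewrite -mnmDE -y_eq.
by rewrite eqPP' ?eqQQ' // => j; apply: leq_trans (le_b j); rewrite ?leq_addl ?leq_addr.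
Qed.

Lemma coef_eq_upto_prod b n (P Q : 'I_n -> poly) :
  (forall i, coef_eq_upto b (P i) (Q i)) ->
  coef_eq_upto b (\prod_(i < n) P i) (\prod_(i < n) Q i).
Proof. by move=> eqPQ; elim/big_ind2: _ => // *; apply: coef_eq_uptoM. Qed.

Lemma coef_eq_uptoX b P Q n : coef_eq_upto b P Q -> coef_eq_upto b (P ^+ n) (Q ^+ n).
Proof.
by move=> eqPQ; rewrite -[n]card_ord -!prodr_const; apply: coef_eq_upto_prod.
Qed.

Lemma gen_mpoly_shrink g b c :
  (c <= b)%N -> coef_eq_upto c (gen_mpoly b g) (gen_mpoly c g).
Proof.
move=> c_le_b y y_le_c; rewrite -(mnm_of_vecK y).
by rewrite !mcoeff_gen_mpoly // => j; rewrite ffunE // (leq_trans (y_le_c j)).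
Qed.

Lemma gen_mpolyX f b k :
  coef_eq_upto b ((gen_mpoly b f) ^+ k) (gen_mpoly b (binomf f k)).
Proof.
move=> y y_le_b; rewrite -(mnm_of_vecK y) mcoeff_gen_mpoly; last first.
  by move=> j; rewrite ffunE.
set x := [ffun j => y j].
have x_le_b : (vbound x <= b)%N by apply/bigmax_leqP => j _; rewrite ffunE.
rewrite binomf_mcoeff; apply: coef_eq_uptoX; first exact: gen_mpoly_shrink.
by move=> j; rewrite mnmE vbound_ge.
Qed.

End GeneratingPolynomial.

Arguments gen_mpoly {R N}.

Section Frobenius.
Variables (N p : nat).
Hypothesis p_pr : prime p.
Local Notation poly := {mpoly 'F_p[N]}.

Lemma gen_mpolyXp b g i : (gen_mpoly b g : poly) ^+ (p ^ i) =
  \sum_(m : bvec N b) (g (bvec_val m))%:R *: 'X_[(mnm_of_vec (bvec_val m) *+ p ^ i)%MM].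
Proof.
have pchar_poly : p \in [pchar poly] := rmorph_pchar (@mpolyC N _) (pchar_Fp p_pr).
have pnat_pi : [pchar poly].-nat (p ^ i)%N.
  by rewrite (eq_pnat _ (pcharf_eq pchar_poly)) pnatX pnat_id.
have Fp_fermat (c : 'F_p) : c ^+ (p ^ i) = c.
  elim: i {pnat_pi} => [|i IHi]; first exact: expr1.
  by rewrite expnSr exprM IHi -[p in c ^+ p](card_Fp p_pr) expf_card.
have zeroX : (0 : poly) ^+ (p ^ i) = 0 by rewrite expr0n expn_eq0 eqn0Ngt prime_gt0.
rewrite (big_morph _ (fun P Q => exprDn_pchar P Q pnat_pi) zeroX).
by apply: eq_bigr => m _; rewrite exprZn Fp_fermat mpolyXn.
Qed.

Lemma binomf_digits_Fp (f : vecN N -> nat) r (kd : nat -> nat) (l : vecN N) :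
  (binomf f (\sum_(j < r.+1) kd j * p ^ j) l)%:R = (lucas_rhs f p r kd l)%:R :> 'F_p.
Proof.
rewrite binomf_mcoeff expr_sum; under eq_bigr do rewrite exprM.
transitivity ((\prod_(j < r.+1) (gen_mpoly (vbound l) (binomf f (kd j)) : poly) ^+ (p ^ j))
                @_(mnm_of_vec l)).
  apply: (coef_eq_upto_prod (b := vbound l)) => [j|j].
    exact/coef_eq_uptoX/gen_mpolyX.
  by rewrite mnmE vbound_ge.
under eq_bigr do rewrite gen_mpolyXp.
rewrite mcoeff_prod_sum /lucas_rhs natr_sum.
apply: eq_big => [t|t _]; last by rewrite natr_prod.
exact: eq_mnm_of_bvec_sum.
Qed.

End Frobenius.

Local Close Scope ring_scope.

Theorem theorem13 (N : nat) (f : vecN N -> nat) (p r : nat) (kd : nat -> nat)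
  (l : vecN N) :
  1 <= N -> prime p -> (forall j, j <= r -> kd j < p) ->
  binomf f (\sum_(j < r.+1) kd j * p ^ j) l = lucas_rhs f p r kd l %[mod p].
Proof.
move=> _ p_pr _; have := congr1 (@nat_of_ord _) (binomf_digits_Fp p_pr f r kd l).
by rewrite !val_Fp_nat.
Qed.
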